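(* Let $A\overset{i}{\to}U\overset{j}{\to}S$ be an extension of a semilattice of groups $A$ by an inverse semigroup $S$, $\rho$ a transversal of $j$, and $\Lambda=(\alpha,\lambda,f)$ the twisted $S$-module structure on $A$ induced by $\rho$. Then $\Lambda$ is a Sieben twisted $S$-module structure, i.e. $f(s,e)=\alpha(ses^{-1})$ and $f(e,s)=\alpha(ess^{-1})$ for all $s\in S$ and $e\in E(S)$, if and only if $\rho$ is order-preserving ($s\le t\Rightarrow\rho(s)\le\rho(t)$ in the natural partial orders).
   Context: A semilattice of groups is an inverse semigroup $A$ whose idempotents are central; $A_e=\{a: aa^{-1}=a^{-1}a=e\}$. An extension of $A$ by $S$ is an inverse semigroup $U$ with a monomorphism $i:A\to U$ and an idempotent-separating epimorphism $j:U\to S$ with $i(A)=j^{-1}(E(S))$. A transversal of $j$ is $\rho:S\to U$ with $j\circ\rho=\mathrm{id}_S$ and $\rho(E(S))\subseteq E(U)$. The induced structure: $\alpha=i^{-1}\circ\rho|_{E(S)}$, $\lambda_s(a)=i^{-1}(\rho(s)i(a)\rho(s)^{-1})$, and $f(s,t)$ the unique element of $A_{\alpha(stt^{-1}s^{-1})}$ with $\rho(s)\rho(t)=i(f(s,t))\rho(st)$. *)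

(* This is the standard equivalent definition of inverse semigroups. *)
Record InvSemigroup := {
  carrier :> Type;
  smul : carrier -> carrier -> carrier;
  sinv : carrier -> carrier;
  smulA : forall x y z, smul x (smul y z) = smul (smul x y) z;
  smul_inv_mul : forall x, smul (smul x (sinv x)) x = x;
  sinv_mul_inv : forall x, smul (smul (sinv x) x) (sinv x) = sinv x;
  sidem_comm : forall e f, smul e e = e -> smul f f = f -> smul e f = smul f e
}.

Arguments smul {i} _ _.
Arguments sinv {i} _.

Definition idempotent {S : InvSemigroup} (e : S) : Prop := smul e e = e.

Definition nat_le {S : InvSemigroup} (s t : S) : Prop :=
  exists e : S, idempotent e /\ s = smul e t.

Definition semilattice_of_groups (A : InvSemigroup) : Prop :=
  forall e a : A, idempotent e -> smul e a = smul a e.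

Definition in_component {A : InvSemigroup} (e a : A) : Prop :=
  smul a (sinv a) = e /\ smul (sinv a) a = e.

Definition is_hom {S T : InvSemigroup} (h : S -> T) : Prop :=
  forall x y : S, h (smul x y) = smul (h x) (h y).

Definition is_extension (A U S : InvSemigroup) (i : A -> U) (j : U -> S) : Prop :=
  semilattice_of_groups A /\
  (is_hom i /\ (forall a b, i a = i b -> a = b)) /\
  (is_hom j /\ (forall s : S, exists u : U, j u = s)) /\
  (forall e f : U, idempotent e -> idempotent f -> j e = j f -> e = f) /\
  (forall u : U, (exists a : A, i a = u) <-> idempotent (j u)).

Definition is_transversal {U S : InvSemigroup} (j : U -> S) (rho : S -> U) : Prop :=
  (forall s, j (rho s) = s) /\ (forall e : S, idempotent e -> idempotent (rho e)).

(* alpha = i^{-1} o rho on E(S) (values outside E(S) are irrelevant). *)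
Definition induced_alpha {A U S : InvSemigroup} (i : A -> U) (rho : S -> U)
  (alpha : S -> A) : Prop :=
  forall e : S, idempotent e -> i (alpha e) = rho e.

Definition induced_f {A U S : InvSemigroup} (i : A -> U) (rho : S -> U)
  (alpha : S -> A) (f : S -> S -> A) : Prop :=
  forall s t : S,
    in_component (alpha (smul (smul s t) (sinv (smul s t)))) (f s t) /\
    smul (rho s) (rho t) = smul (i (f s t)) (rho (smul s t)).

Definition sieben {A S : InvSemigroup} (alpha : S -> A) (f : S -> S -> A) : Prop :=
  forall s e : S, idempotent e ->
    f s e = alpha (smul (smul s e) (sinv s)) /\
    f e s = alpha (smul (smul e s) (sinv s)).

Definition order_preserving {S U : InvSemigroup} (rho : S -> U) : Prop :=
  forall s t : S, nat_le s t -> nat_le (rho s) (rho t).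

From Stdlib Require Import Setoid.

(* The Sieben identities say exactly that rho (s e) = rho s rho e and
   rho (e s) = rho e rho s for idempotent e: the cocycle f a b is the identity
   alpha (ab (ab)^-1) of its component iff rho a rho b = rho (ab).  Multiplicativity
   on idempotents gives order preservation since s <= t means s = e t.
   Conversely, if rho preserves the order then rho (s e) and rho s rho e both lie
   below rho s and have the same image under j; elements below a common element are
   determined by their range idempotents, which j separates. *)

Arguments smulA {_}.
Arguments smul_inv_mul {_}.
Arguments sinv_mul_inv {_}.
Arguments sidem_comm {_}.

Local Notation "x ** y" := (smul x y) (at level 40, left associativity).
Local Notation "x ^-1" := (sinv x) (at level 2, left associativity, format "x ^-1").

Section InverseSemigroup.

Variable S : InvSemigroup.
Implicit Types x y e k : S.

Lemma idempotent_mulV x : idempotent (x ** x^-1).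
Proof. unfold idempotent. rewrite smulA, smul_inv_mul. reflexivity. Qed.

Lemma idempotent_Vmul x : idempotent (x^-1 ** x).
Proof. unfold idempotent. rewrite smulA, sinv_mul_inv. reflexivity. Qed.

Lemma mulKV x : x ** (x^-1 ** x) = x.
Proof. rewrite smulA. apply smul_inv_mul. Qed.

Lemma sinv_unique x y : x ** y ** x = x -> y ** x ** y = y -> y = x^-1.
Proof.
intros Hx Hy.
assert (Ixy : idempotent (x ** y)) by (unfold idempotent; rewrite smulA, Hx; reflexivity).
assert (Iyx : idempotent (y ** x)) by (unfold idempotent; rewrite smulA, Hy; reflexivity).
assert (Eright : x ** y = x ** x^-1).
{ rewrite <- (smul_inv_mul x) at 1. rewrite <- smulA,
    (sidem_comm _ _ (idempotent_mulV x) Ixy), smulA, Hx. reflexivity. }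
assert (Eleft : y ** x = x^-1 ** x).
{ rewrite <- (mulKV x) at 1. rewrite smulA, (sidem_comm _ _ Iyx (idempotent_Vmul x)),
    <- smulA, (smulA x y x), Hx. reflexivity. }
rewrite <- Hy, Eleft, <- smulA, Eright, smulA, sinv_mul_inv. reflexivity.
Qed.

Lemma sinv_idempotent e : idempotent e -> e^-1 = e.
Proof.
intro He. symmetry. apply sinv_unique; unfold idempotent in He; rewrite !He; reflexivity.
Qed.

Lemma sinv_mul x y : (x ** y)^-1 = y^-1 ** x^-1.
Proof.
symmetry. apply sinv_unique.
- rewrite <- !smulA, (smulA y y^-1 (x^-1 ** (x ** y))), (smulA x^-1 x y),
    (smulA (y ** y^-1)), (sidem_comm _ _ (idempotent_mulV y) (idempotent_Vmul x)),
    <- smulA, <- (smulA y), mulKV, !smulA, smul_inv_mul.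
  reflexivity.
- rewrite <- !smulA, (smulA x^-1 x), (smulA y y^-1 x^-1), (smulA (x^-1 ** x)),
    (sidem_comm _ _ (idempotent_Vmul x) (idempotent_mulV y)),
    <- (smulA (y ** y^-1)), sinv_mul_inv, smulA, (smulA y^-1 y), sinv_mul_inv.
  reflexivity.
Qed.

Lemma mulV_idem_mull e x : idempotent e -> e ** x ** (e ** x)^-1 = e ** x ** x^-1.
Proof.
intro He. rewrite sinv_mul, (sinv_idempotent e He), <- !smulA, (smulA x x^-1 e),
  (sidem_comm _ _ (idempotent_mulV x) He), (smulA e e), He.
reflexivity.
Qed.

Lemma mulV_idem_mulr x e : idempotent e -> x ** e ** (x ** e)^-1 = x ** e ** x^-1.
Proof.
intro He. rewrite sinv_mul, (sinv_idempotent e He), <- !smulA, (smulA e e), He.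
reflexivity.
Qed.

Lemma nat_leP x y : nat_le x y -> x = x ** x^-1 ** y.
Proof.
intros [e [He ->]]. rewrite mulV_idem_mull by exact He.
rewrite <- !smulA, mulKV. reflexivity.
Qed.

Lemma nat_le_idem_mull e x : idempotent e -> nat_le (e ** x) x.
Proof. intro He. exists e. split; [exact He | reflexivity]. Qed.

Lemma nat_le_idem_mulr x e : idempotent e -> nat_le (x ** e) x.
Proof.
intro He. exists (x ** e ** (x ** e)^-1). split; [apply idempotent_mulV |].
rewrite mulV_idem_mulr by exact He.
rewrite <- !smulA, (sidem_comm _ _ He (idempotent_Vmul x)), smulA, mulKV.
reflexivity.
Qed.

End InverseSemigroup.

Lemma hom_sinv (S T : InvSemigroup) (h : S -> T) (x : S) :
  is_hom h -> h (x^-1) = (h x)^-1.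
Proof.
intro Hh. apply sinv_unique; rewrite <- !Hh.
- rewrite smul_inv_mul. reflexivity.
- rewrite sinv_mul_inv. reflexivity.
Qed.

Section Transversal.

Variables (A U S : InvSemigroup) (i : A -> U) (j : U -> S) (rho : S -> U).
Variables (alpha : S -> A) (f : S -> S -> A).
Hypothesis i_hom : is_hom i.
Hypothesis i_inj : forall a b, i a = i b -> a = b.
Hypothesis j_hom : is_hom j.
Hypothesis j_idem_sep : forall e k : U, idempotent e -> idempotent k -> j e = j k -> e = k.
Hypothesis rho_transversal : is_transversal j rho.
Hypothesis alpha_induced : induced_alpha i rho alpha.
Hypothesis f_induced : induced_f i rho alpha f.

Lemma j_mulV (u : U) : j (u ** u^-1) = j u ** (j u)^-1.
Proof. rewrite j_hom, (hom_sinv _ _ j u j_hom). reflexivity. Qed.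

Lemma rho_mulV (c : S) : rho (c ** c^-1) = rho c ** (rho c)^-1.
Proof.
destruct rho_transversal as [j_rho rho_idem].
apply j_idem_sep; [apply rho_idem, idempotent_mulV | apply idempotent_mulV |].
rewrite j_mulV, !j_rho. reflexivity.
Qed.

Lemma j_inj_nat_le_common (u v w : U) :
  nat_le u w -> nat_le v w -> j u = j v -> u = v.
Proof.
intros Huw Hvw Huv. rewrite (nat_leP _ _ _ Huw), (nat_leP _ _ _ Hvw). f_equal.
apply j_idem_sep; try apply idempotent_mulV.
rewrite !j_mulV, Huv. reflexivity.
Qed.

Lemma rho_mul_iff_f_identity (a b : S) :
  rho a ** rho b = rho (a ** b) <-> f a b = alpha (a ** b ** (a ** b)^-1).
Proof.
destruct (f_induced a b) as [[_ f_Vmul] f_eq].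
set (c := a ** b) in *.
assert (i_alpha : i (alpha (c ** c^-1)) = rho c ** (rho c)^-1)
  by (rewrite alpha_induced by apply idempotent_mulV; apply rho_mulV).
split.
- intro Hmul. rewrite Hmul in f_eq. apply i_inj.
  rewrite <- (mulKV _ (f a b)), i_hom, f_Vmul, i_alpha, smulA, <- f_eq.
  reflexivity.
- intro Hf. rewrite f_eq, Hf, i_alpha, smul_inv_mul. reflexivity.
Qed.

Definition rho_mul_idempotent : Prop :=
  forall s e : S, idempotent e ->
    rho s ** rho e = rho (s ** e) /\ rho e ** rho s = rho (e ** s).

Lemma sieben_iff_rho_mul_idempotent : sieben alpha f <-> rho_mul_idempotent.
Proof.
split; intros H s e He; destruct (H s e He) as [Hse Hes]; split.
- apply rho_mul_iff_f_identity. rewrite mulV_idem_mulr by exact He. exact Hse.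
- apply rho_mul_iff_f_identity. rewrite mulV_idem_mull by exact He. exact Hes.
- rewrite <- mulV_idem_mulr by exact He. apply rho_mul_iff_f_identity, Hse.
- rewrite <- mulV_idem_mull by exact He. apply rho_mul_iff_f_identity, Hes.
Qed.

Lemma order_preserving_iff_rho_mul_idempotent :
  order_preserving rho <-> rho_mul_idempotent.
Proof.
destruct rho_transversal as [j_rho rho_idem].
assert (j_rho_mul : forall s t, j (rho s ** rho t) = j (rho (s ** t)))
  by (intros s t; rewrite j_hom, !j_rho; reflexivity).
split.
- intros Hop s e He. split; apply j_inj_nat_le_common with (w := rho s); auto.
  + apply nat_le_idem_mulr, rho_idem, He.
  + apply Hop, nat_le_idem_mulr, He.
  + apply nat_le_idem_mull, rho_idem, He.
  + apply Hop, nat_le_idem_mull, He.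
- intros Hmul s t [e [He ->]]. destruct (Hmul t e He) as [_ <-].
  apply nat_le_idem_mull, rho_idem, He.
Qed.

End Transversal.

Theorem proposition3p23 (A U S : InvSemigroup) (i : A -> U) (j : U -> S)
  (rho : S -> U) (alpha : S -> A) (f : S -> S -> A) :
  is_extension A U S i j ->
  is_transversal j rho ->
  induced_alpha i rho alpha ->
  induced_f i rho alpha f ->
  (sieben alpha f <-> order_preserving rho).
Proof.
intros [_ [[i_hom i_inj] [[j_hom _] [j_idem_sep _]]]] Hrho Halpha Hf.
rewrite (sieben_iff_rho_mul_idempotent A U S i j rho alpha f i_hom i_inj j_hom
           j_idem_sep Hrho Halpha Hf).
rewrite (order_preserving_iff_rho_mul_idempotent U S j rho j_hom j_idem_sep Hrho).
reflexivity.
Qed.
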